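(* Let $C\ge 1$ and $t>0$. Suppose each of $C$ recruitment centres has been open for the same time $t$, so that $t_1=\dots=t_C=t$, and let $n_1,\dots,n_C$ be the observed recruitment counts, with $N_\bullet=\sum_{c=1}^C n_c$. Consider the log-likelihood (up to an additive constant) \[ \ell(\alpha,\beta)=C\alpha\log\beta-\sum_{c=1}^C(\alpha+n_c)\log(\beta+t_c)-C\log\Gamma(\alpha)+\sum_{c=1}^C\log\Gamma(\alpha+n_c),\qquad \alpha,\beta>0. \] Then the maximum likelihood estimator $(\widehat\alpha,\widehat\beta)$ maximising $\ell$ satisfies $\widehat\alpha/\widehat\beta=N_\bullet/(Ct)$.
   Context: This is the marginal log-likelihood of the Poisson–Gamma recruitment model: the centre rates $\lambda_1,\dots,\lambda_C$ are independent $\mathsf{Gam}(\alpha,\beta)$ (shape $\alpha$, rate $\beta$, density $\beta^\alpha\lambda^{\alpha-1}e^{-\beta\lambda}/\Gamma(\alpha)$), and given $\lambda_c$ the count $n_c$ at centre $c$ is Poisson with mean $\lambda_c t_c$, where $t_c$ is the time centre $c$ has been open. *)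

From Stdlib Require Import Reals List.
From Coquelicot Require Import Coquelicot.
Open Scope R_scope.

Definition Gamma (a : R) : R :=
  RInt_gen (fun x => Rpower x (a - 1) * exp (- x)) (at_right 0) (Rbar_locally p_infty).

Definition sumC (C : nat) (f : nat -> R) : R :=
  fold_right Rplus 0 (map f (seq 0 C)).

(* Poisson-Gamma marginal log-likelihood (up to an additive constant),
   C centres, opening times tc c, counts n c. *)
Definition loglik (C : nat) (tc : nat -> R) (n : nat -> nat) (a b : R) : R :=
  INR C * a * ln b
  - sumC C (fun c => (a + INR (n c)) * ln (b + tc c))
  - INR C * ln (Gamma a)
  + sumC C (fun c => ln (Gamma (a + INR (n c)))).

Definition is_MLE (C : nat) (tc : nat -> R) (n : nat -> nat) (a b : R) : Prop :=
  0 < a /\ 0 < b /\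
  forall a' b', 0 < a' -> 0 < b' -> loglik C tc n a' b' <= loglik C tc n a b.

(* For fixed alpha, the Gamma terms of the log-likelihood do not depend on beta, and when all
   opening times equal t the beta-dependence is C alpha log beta - (C alpha + N) log (beta + t).
   At the maximiser its beta-derivative C alpha / beta - (C alpha + N) / (beta + t) vanishes,
   which rearranges to C alpha t = N beta. *)
From Stdlib Require Import Reals List Lra Lia.
From Coquelicot Require Import Coquelicot.
Open Scope R_scope.

Lemma sumC_ext (C : nat) (f g : nat -> R) :
  (forall c, (c < C)%nat -> f c = g c) -> sumC C f = sumC C g.
Proof.
  intros Hfg. unfold sumC. f_equal. apply map_ext_in.
  intros c Hc. apply in_seq in Hc. apply Hfg. lia.
Qed.

Lemma sumC_affine_mul (C : nat) (a k : R) (x : nat -> R) :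
  sumC C (fun c => (a + x c) * k) = (INR C * a + sumC C x) * k.
Proof.
  unfold sumC. rewrite <- (length_seq C 0) at 2.
  induction (seq 0 C) as [|c l IH]; cbn [map fold_right length].
  - simpl. ring.
  - rewrite IH, S_INR. ring.
Qed.

Lemma sumC_nonneg (C : nat) (f : nat -> R) :
  (forall c, 0 <= f c) -> 0 <= sumC C f.
Proof.
  intros Hf. unfold sumC.
  induction (seq 0 C) as [|c l IH]; simpl; [lra|].
  specialize (Hf c). lra.
Qed.

Lemma loglik_equal_times (C : nat) (t : R) (tc : nat -> R) (n : nat -> nat) (a b : R) :
  (forall c, (c < C)%nat -> tc c = t) ->
  loglik C tc n a b =
    INR C * a * ln b - (INR C * a + sumC C (fun c => INR (n c))) * ln (b + t)
    - INR C * ln (Gamma a) + sumC C (fun c => ln (Gamma (a + INR (n c)))).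
Proof.
  intros Htc. unfold loglik.
  rewrite (sumC_ext C _ (fun c => (a + INR (n c)) * ln (b + t))).
  - rewrite sumC_affine_mul. ring.
  - intros c Hc. rewrite Htc by exact Hc. reflexivity.
Qed.

Lemma is_derive_ln_shift_combination (p q t b : R) :
  0 < b -> 0 < b + t ->
  is_derive (fun x => p * ln x - q * ln (x + t)) b (p / b - q / (b + t)).
Proof.
  intros Hb Hbt. auto_derive.
  - lra.
  - field. lra.
Qed.

Lemma derive_eq_0_at_interior_max (f : R -> R) (lo hi x l : R) :
  lo < x < hi -> (forall y, lo < y < hi -> f y <= f x) ->
  is_derive f x l -> l = 0.
Proof.
  intros Hx Hmax Hd. apply is_derive_Reals in Hd.
  pose (pr := exist (fun l => derivable_pt_abs f x l) l Hd : derivable_pt f x).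
  rewrite <- (derive_pt_eq_0 f x l pr Hd).
  apply (deriv_maximum f lo hi x pr); [lra | lra |].
  intros y Hlo Hhi. apply Hmax. lra.
Qed.

Theorem lemma1 (C : nat) (t : R) (tc : nat -> R) (n : nat -> nat) (ahat bhat : R) :
  (1 <= C)%nat -> 0 < t ->
  (forall c, (c < C)%nat -> tc c = t) ->
  is_MLE C tc n ahat bhat ->
  ahat / bhat = sumC C (fun c => INR (n c)) / (INR C * t).
Proof.
  intros HC Ht Htc [Ha [Hb Hmax]].
  set (N := sumC C (fun c => INR (n c))).
  assert (HCpos : 1 <= INR C) by (apply (le_INR 1); exact HC).
  assert (Hcrit : INR C * ahat / bhat - (INR C * ahat + N) / (bhat + t) = 0).
  { apply (derive_eq_0_at_interior_max
             (fun x => INR C * ahat * ln x - (INR C * ahat + N) * ln (x + t)) 0 (bhat + 1) bhat).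
    - lra.
    - intros y Hy. pose proof (Hmax ahat y Ha (proj1 Hy)) as Hle.
      rewrite !(loglik_equal_times C t) in Hle by exact Htc. fold N in Hle. lra.
    - apply is_derive_ln_shift_combination; lra. }
  assert (Hbalance : INR C * ahat * t = N * bhat).
  { apply Rminus_diag_uniq.
    replace (INR C * ahat * t - N * bhat)
      with ((INR C * ahat / bhat - (INR C * ahat + N) / (bhat + t)) * (bhat * (bhat + t)))
      by (field; lra).
    rewrite Hcrit. ring. }
  apply (Rmult_eq_reg_r (bhat * (INR C * t))).
  - field_simplify; [lra | lra | nra].
  - apply Rgt_not_eq. apply Rmult_lt_0_compat; [lra | nra].
Qed.
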